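(* Let $n\le -1$ be an odd integer with $3\mid n$ and $n\equiv 1\pmod 4$. Then $q_n$ has no monic quadratic factor $f\in\mathbb{Z}[w]$ with $f\equiv w^2\pmod 3$.
   Context: Define $q_n\in\mathbb{Z}[w]$ for odd $n\le -1$ by $q_{-1}=w^3-w^2+2w-7$, $q_{-3}=w^5-2w^4-2w^3+5w^2+3w-9$, $q_{-5}=w^7-2w^6-4w^5+8w^4+4w^3-7w^2+2w-7$, and $q_n=(w^2-1)(q_{n+2}-q_{n+4})+q_{n+6}$ for odd $n<-5$. *)

From HB Require Import structures.
From mathcomp Require Import all_boot all_order all_algebra.
Set Implicit Arguments. Unset Strict Implicit. Unset Printing Implicit Defensive.
Import Order.TTheory GRing.Theory Num.Theory.
Local Open Scope ring_scope.

(* qnat k = q_{-(2k+1)} in Z[w] *)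
Fixpoint qnat (k : nat) : {poly int} :=
  match k with
  | 0%N => 'X^3 - 'X^2 + 2%:P * 'X - 7%:P
  | 1%N => 'X^5 - 2%:P * 'X^4 - 2%:P * 'X^3 + 5%:P * 'X^2 + 3%:P * 'X - 9%:P
  | 2%N => 'X^7 - 2%:P * 'X^6 - 4%:P * 'X^5 + 8%:P * 'X^4 + 4%:P * 'X^3
           - 7%:P * 'X^2 + 2%:P * 'X - 7%:P
  | S ((S ((S k0) as k1)) as k2) =>
      ('X^2 - 1) * (qnat k2 - qnat k1) + qnat k0
  end.

(* q n for odd n <= -1: n = -(2k+1), k = (|n| - 1)/2 *)
Definition q (n : int) : {poly int} := qnat ((`|n|%N).-1./2).

(* Write n = -(2k+1), so that q_n = qnat k; the hypotheses on n say exactly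
   that k = 1 (mod 6).  Suppose q_n = f g with f = w^2 + al w + be, 3 | al, be.
   - Constant terms: be * g_0 = q_n(0) = -9, since k is odd.
   - Coefficient of w^2 modulo 3: it is g_0 (as 3 | al, be), and an induction
     along the recurrence shows it equals 2 mod 3 whenever k = 0,1,2 (mod 6).
     Hence g_0 = 2 (mod 3) divides 9, which forces g_0 = -1 and be = 9.
   - Reduction modulo 5: no polynomial w^2 + a w + 9 over F_5 divides qnat k
     when k = 1 (mod 6).  To see this we compute the remainders of qnat k
     modulo w^2 + a w + 9 as pairs of residues; the recurrence for qnat acts on
     triples of consecutive remainders, this action has period 780, and a
     finite computation checks that no remainder with k = 1 (mod 6) vanishes. *)
From HB Require Import structures.
From mathcomp Require Import all_boot all_order all_algebra zify ring.
Import Order.TTheory GRing.Theory Num.Theory.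
Set Implicit Arguments. Unset Strict Implicit. Unset Printing Implicit Defensive.
Local Open Scope ring_scope.

Lemma nat_ind3 (P : nat -> Prop) :
  P 0%N -> P 1%N -> P 2%N -> (forall k, P k -> P k.+1 -> P k.+2 -> P k.+3) ->
  forall k, P k.
Proof.
move=> P0 P1 P2 PS k; suff [] : [/\ P k, P k.+1 & P k.+2] by [].
by elim: k => [|k [Pk Pk1 Pk2]]; split=> //; apply: PS.
Qed.

Lemma iter_periodic (T : Type) (f : T -> T) (x : T) (m : nat) :
  iter m f x = x -> forall t r, iter (m * t + r) f x = iter r f x.
Proof.
move=> fmx t r; rewrite addnC iterD; congr (iter r f _).
by elim: t => [|t IH]; rewrite ?muln0 // mulnS iterD IH fmx.
Qed.

Lemma qnatS k : qnat k.+3 = ('X^2 - 1) * (qnat k.+2 - qnat k.+1) + qnat k.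
Proof. by []. Qed.

Lemma coef0_X2subr1M (R : nzRingType) (D : {poly R}) :
  (('X^2 - 1) * D)`_0 = - D`_0.
Proof. by rewrite mulrBl mul1r coefB coefXnM sub0r. Qed.

Lemma coef2_X2subr1M (R : nzRingType) (D : {poly R}) :
  (('X^2 - 1) * D)`_2 = D`_0 - D`_2.
Proof. by rewrite mulrBl mul1r coefB coefXnM. Qed.

Lemma coef0_qnat k : (qnat k)`_0 = if odd k then -9 else -7.
Proof.
elim/nat_ind3: k => [|||k IH0 IH1 IH2].
  1-3: by rewrite /= !coefE.
rewrite qnatS coefD coef0_X2subr1M !coefB IH0 IH1 IH2 /=.
by case: (odd k).
Qed.

Lemma coef2_qnat_mod3 k :
  ((qnat k)`_2 %% 3)%Z = if (k %% 6 < 3)%N then 2 else 1.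
Proof.
elim/nat_ind3: k => [|||k IH0 IH1 IH2].
  1-3: by rewrite /= !coefE.
rewrite qnatS coefD coef2_X2subr1M !coefB !coef0_qnat.
move: IH0 IH1 IH2.
move: ((qnat k)`_2 : int) ((qnat k.+1)`_2 : int) ((qnat k.+2)`_2 : int) => x y z.
by do 6 case: ifP => ?; lia.
Qed.

Lemma index_mod6 (n : int) :
  n <= -1 -> ~~ (2 %| n)%Z -> (3 %| n)%Z -> (n = 1 %[mod 4])%Z ->
  ((`|n|%N).-1./2 %% 6 = 1)%N.
Proof. lia. Qed.

Lemma cofactor_of_9 (x y : int) : x * y = -9 -> (y %% 3)%Z = 2 -> x = 9.
Proof.
move=> Exy Ey.
have : (`|y| \in divisors 9)%N.
  by rewrite -dvdn_divisors // -[9%N]/`|(-9 : int)|%N -Exy abszM dvdn_mull.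
have -> : divisors 9 = [:: 1; 3; 9]%N by [].
by rewrite !inE => /or3P [] /eqP Ey'; nia.
Qed.

Lemma monic_quadraticP (R : nzRingType) (f : {poly R}) :
  f \is monic -> size f = 3%N -> exists al be, f = 'X^2 + al%:P * 'X + be%:P.
Proof.
move=> /monicP f_monic f_size; exists f`_1, f`_0.
apply/polyP => -[|[|[|i]]]; rewrite !coefE /= ?mulr0 ?mulr1 ?add0r ?addr0 //.
- by rewrite -f_monic lead_coefE f_size.
- by rewrite nth_default // f_size.
Qed.

Lemma coef2_quadraticM (R : nzRingType) (al be : R) (g : {poly R}) :
  (('X^2 + al%:P * 'X + be%:P) * g)`_2 = g`_0 + al * g`_1 + be * g`_2.
Proof. by rewrite !mulrDl !coefD coefXnM -mulrA coefCM coefXM coefCM. Qed.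

Lemma size_linear (R : nzRingType) (c0 c1 : R) :
  (size (c1%:P * 'X + c0%:P)%R <= 2)%N.
Proof. by rewrite size_MXaddC; case: ifP => // _; rewrite ltnS size_polyC leq_b1. Qed.

(* Arithmetic of F[w]/(w^2 + a w + b) for F = Z/pZ: the class of c0 + c1 w is
   stored as the pair of integer representatives (c0, c1) reduced mod p, so
   that it can be evaluated by the kernel. *)
Section ResidueArithmetic.
Variables (p : nat) (a b : int).

Definition red (x : int) : int := (x %% p)%Z.
Definition res_add (u v : int * int) := (red (u.1 + v.1), red (u.2 + v.2)).
Definition res_sub (u v : int * int) := (red (u.1 - v.1), red (u.2 - v.2)).
(* Multiplication by w, using w^2 = - a w - b. *)
Definition res_mulX (u : int * int) := (red (- (b * u.2)), red (u.1 - a * u.2)).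
Definition res_of_seq (s : seq int) : int * int :=
  foldr (fun c u => res_add (c, 0) (res_mulX u)) (0, 0) s.
(* One step of the recurrence of qnat on three consecutive remainders. *)
Definition res_step (t : (int * int) * (int * int) * (int * int)) :=
  let: (u0, u1, u2) := t in
  let d := res_sub u2 u1 in (u1, u2, res_add (res_sub (res_mulX (res_mulX d)) d) u0).

End ResidueArithmetic.

Section ResidueCorrectness.
Variables (R : comNzRingType) (p : nat) (a b : int).
Hypothesis pcharRp : p \in [pchar R].

Definition quad : {poly R} := 'X^2 + (a%:~R)%:P * 'X + (b%:~R)%:P.
Definition res_poly (u : int * int) : {poly R} := (u.2%:~R)%:P * 'X + (u.1%:~R)%:P.
Definition eqmod (P Q : {poly R}) : Prop := exists h, P - Q = quad * h.

Lemma eqmod_eq P Q : P = Q -> eqmod P Q.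
Proof. by move->; exists 0; rewrite subrr mulr0. Qed.

Lemma eqmod_trans P Q S : eqmod P Q -> eqmod Q S -> eqmod P S.
Proof. by case=> h1 e1 [h2 e2]; exists (h1 + h2); rewrite mulrDr -e1 -e2 addrA subrK. Qed.

Lemma eqmodD P1 Q1 P2 Q2 : eqmod P1 Q1 -> eqmod P2 Q2 -> eqmod (P1 + P2) (Q1 + Q2).
Proof. by case=> h1 e1 [h2 e2]; exists (h1 + h2); rewrite mulrDr -e1 -e2 opprD addrACA. Qed.

Lemma eqmodB P1 Q1 P2 Q2 : eqmod P1 Q1 -> eqmod P2 Q2 -> eqmod (P1 - P2) (Q1 - Q2).
Proof. by case=> h1 e1 [h2 e2]; exists (h1 - h2); rewrite mulrBr -e1 -e2; ring. Qed.

Lemma eqmodMl S P Q : eqmod P Q -> eqmod (S * P) (S * Q).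
Proof. by case=> h e; exists (S * h); rewrite -mulrBr e mulrCA. Qed.

Lemma intr_red x : (red p x)%:~R = x%:~R :> R.
Proof.
have p_eq0 : p%:~R = 0 :> R := pcharf0 pcharRp.
by rewrite /red {2}(divz_eq x p) [RHS]intrD intrM p_eq0 mulr0 add0r.
Qed.

Lemma res_poly_add u v : res_poly (res_add p u v) = res_poly u + res_poly v.
Proof. by rewrite /res_poly /= !intr_red !intrD !polyCD; ring. Qed.

Lemma res_poly_sub u v : res_poly (res_sub p u v) = res_poly u - res_poly v.
Proof. by rewrite /res_poly /= !intr_red !intrB !polyCB; ring. Qed.

Lemma res_poly_mulX u : eqmod ('X * res_poly u) (res_poly (res_mulX p a b u)).
Proof.
exists (u.2%:~R)%:P; rewrite /res_poly /quad /= !intr_red.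
by rewrite intrN intrB !intrM; ring.
Qed.

Lemma res_of_seq_eqmod s : eqmod (Poly (map intr s)) (res_poly (res_of_seq p a b s)).
Proof.
elim: s => [|c s IH] /=; first by apply: eqmod_eq; rewrite /res_poly /= !polyC0; ring.
rewrite cons_poly_def res_poly_add addrC; apply: eqmodD.
  by apply: eqmod_eq; rewrite /res_poly /= polyC0; ring.
by rewrite mulrC; apply: eqmod_trans (eqmodMl 'X IH) (res_poly_mulX _).
Qed.

Lemma res_step_eqmod P0 P1 P2 u0 u1 u2 :
  eqmod P0 (res_poly u0) -> eqmod P1 (res_poly u1) -> eqmod P2 (res_poly u2) ->
  eqmod (('X^2 - 1) * (P2 - P1) + P0) (res_poly (res_step p a b (u0, u1, u2)).2).
Proof.
move=> e0 e1 e2 /=; rewrite res_poly_add res_poly_sub; apply: eqmodD e0.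
have eD : eqmod (P2 - P1) (res_poly (res_sub p u2 u1)).
  by rewrite res_poly_sub; apply: eqmodB.
have -> : ('X^2 - 1) * (P2 - P1) = 'X * ('X * (P2 - P1)) - (P2 - P1) by ring.
have eXD := eqmod_trans (eqmodMl 'X eD) (res_poly_mulX _).
by apply: eqmodB eD; apply: eqmod_trans (eqmodMl 'X eXD) (res_poly_mulX _).
Qed.

(* A remainder of degree < 2 that is a multiple of the monic quad vanishes. *)
Lemma eqmod_quadM_res g u :
  eqmod (quad * g) (res_poly u) -> (p %| u.1)%Z && (p %| u.2)%Z.
Proof.
case=> h e; have Eu : res_poly u = quad * (g - h).
  by rewrite mulrBr -e opprB addrC subrK.
have small :
    (size ((a%:~R)%:P * 'X + (b%:~R)%:P : {poly R})%R < size ('X^2 : {poly R}))%N.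
  by rewrite size_polyXn ltnS size_linear.
have quad_monic : quad \is monic.
  by rewrite /quad -addrA monicE lead_coefDl // lead_coefXn.
have size_quad : size quad = 3%N.
  by rewrite /quad -addrA size_polyDl // size_polyXn.
have u0 : res_poly u = 0.
  have [gh0|gh_neq0] := eqVneq (g - h) 0; first by rewrite Eu gh0 mulr0.
  have := @size_linear R u.1%:~R u.2%:~R.
  rewrite -/(res_poly u) Eu size_monicM // size_quad add3n !ltnS leqn0.
  by rewrite size_poly_eq0 (negbTE gh_neq0).
rewrite !(dvdz_pcharf pcharRp).
have := congr1 (coefp 0) u0; have := congr1 (coefp 1) u0.
by rewrite /= !coefD !coefMX !coefC /= add0r addr0 => -> ->; rewrite eqxx.
Qed.

End ResidueCorrectness.

(* Coefficient lists (constant term first) of the three initial polynomials. *)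
Definition qcoefs0 : seq int := [:: -7; 2; -1; 1].
Definition qcoefs1 : seq int := [:: -9; 3; 5; -2; -2; 1].
Definition qcoefs2 : seq int := [:: -7; 2; -7; 4; 8; -4; -2; 1].

Lemma qnat_Poly :
  [/\ qnat 0 = Poly qcoefs0, qnat 1 = Poly qcoefs1 & qnat 2 = Poly qcoefs2].
Proof.
split; apply/polyP => i; rewrite coef_Poly !coefE; do 8 case: i => [|i] //=.
by rewrite nth_nil !mulr0 !(subr0, addr0).
Qed.

(* The triple of remainders of (qnat k, qnat k.+1, qnat k.+2). *)
Definition qinit (p : nat) (a b : int) :=
  (res_of_seq p a b qcoefs0, res_of_seq p a b qcoefs1, res_of_seq p a b qcoefs2).
Definition qresidues (p : nat) (a b : int) (k : nat) :=
  iter k (res_step p a b) (qinit p a b).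
Definition qresidue (p : nat) (a b : int) (k : nat) := (qresidues p a b k).1.1.

Lemma qresidue_eqmod (R : comNzRingType) (p : nat) (a b : int) :
  p \in [pchar R] ->
  forall k, eqmod a b (map_poly intr (qnat k)) (res_poly R (qresidue p a b k)).
Proof.
move=> pcharRp k; rewrite /qresidue.
suff [] : [/\ eqmod a b (map_poly intr (qnat k)) (res_poly R (qresidues p a b k).1.1),
   eqmod a b (map_poly intr (qnat k.+1)) (res_poly R (qresidues p a b k).1.2)
 & eqmod a b (map_poly intr (qnat k.+2)) (res_poly R (qresidues p a b k).2)] by [].
elim: k => [|k IH].
  by case: qnat_Poly => -> -> ->; split; rewrite map_Poly; apply: res_of_seq_eqmod.
move: IH; rewrite /qresidues iterS; case: (iter k _ _) => [[u0 u1] u2] [e0 e1 e2].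
split=> //; rewrite qnatS rmorphD rmorphM rmorphB /= rmorphB rmorphXn /= map_polyX rmorph1.
exact: res_step_eqmod.
Qed.

Definition mod5_check : bool :=
  all (fun a : nat =>
      (iter 780 (res_step 5 a 9) (qinit 5 a 9) == qinit 5 a 9) &&
      all (fun i => let u := qresidue 5 a 9 (6 * i + 1) in
                    ~~ ((5 %| u.1)%Z && (5 %| u.2)%Z)) (iota 0 130))
    (iota 0 5).

Lemma mod5_check_ok : mod5_check.
Proof. by vm_compute. Qed.

Lemma qresidue_mod5_nonzero (a k : nat) : (a < 5)%N -> (k %% 6 = 1)%N ->
  ~~ ((5 %| (qresidue 5 a 9 k).1)%Z && (5 %| (qresidue 5 a 9 k).2)%Z).
Proof.
move=> a_lt5 k_mod6; have /allP/(_ a) := mod5_check_ok.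
rewrite mem_iota add0n => /(_ a_lt5) /andP[/eqP period /allP nonzero].
have k_split : k = (780 * (k %/ 780) + (6 * ((k %% 780) %/ 6) + 1))%N by lia.
rewrite /qresidue /qresidues k_split (iter_periodic period).
by apply: nonzero; rewrite mem_iota; lia.
Qed.

Lemma qnat_no_factor_mod5 (k : nat) (al : int) (g : {poly int}) :
  (k %% 6 = 1)%N -> qnat k <> ('X^2 + al%:P * 'X + 9%:P) * g.
Proof.
move=> k_mod6 qE; have pchar5 : 5%N \in [pchar 'F_5] by apply: pchar_Fp.
set a := absz (al %% 5)%Z; have a_lt5 : (a < 5)%N by lia.
have Ea : (a%:~R : 'F_5) = al%:~R.
  by rewrite -[RHS](intr_red pchar5) /red /a; congr intr; lia.
have := qresidue_eqmod a 9 pchar5 k.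
rewrite qE rmorphM /= rmorphD rmorphD rmorphM /= map_polyXn map_polyX !map_polyC /= -Ea.
by move/(eqmod_quadM_res pchar5); apply/negP/qresidue_mod5_nonzero.
Qed.

Theorem lemma5p4 (n : int) :
  n <= -1 -> ~~ (2 %| n)%Z -> (3 %| n)%Z -> (n = 1 %[mod 4])%Z ->
  ~ (exists f : {poly int},
       [/\ f \is monic, size f = 3%N,
           (forall i : nat, (3 %| (f - 'X^2)`_i)%Z)
         & exists g : {poly int}, q n = f * g]).
Proof.
move=> n_neg n_odd n_3 n_mod4 [f [f_monic f_size f_mod3 [g]]].
have k_mod6 := index_mod6 n_neg n_odd n_3 n_mod4.
rewrite /q; set k := (`|n|%N).-1./2 in k_mod6 *.
have [al [be fE]] : exists al be : int, f = 'X^2 + al%:P * 'X + be%:P :=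
  monic_quadraticP f_monic f_size.
have /dvdzP[al3 al_E] : (3 %| al)%Z.
  by move: (f_mod3 1%N); rewrite fE !coefE /= mulr1 add0r addr0 subr0.
have /dvdzP[be3 be_E] : (3 %| be)%Z.
  by move: (f_mod3 0%N); rewrite fE !coefE /= mulr0 !add0r subr0.
rewrite fE => qE.
have const_eq : be * g`_0 = -9.
  have k_odd : odd k by lia.
  by have := coef0_qnat k; rewrite qE coef0M !coefE /= mulr0 !add0r k_odd.
have g0_mod3 : (g`_0 %% 3)%Z = 2.
  have := coef2_qnat_mod3 k; rewrite qE coef2_quadraticM k_mod6 /= al_E be_E.
  move: (g`_0 : int) (g`_1 : int) (g`_2 : int) => x y z; nia.
have be9 : be = 9 := cofactor_of_9 const_eq g0_mod3.
by rewrite be9 in qE; exact: qnat_no_factor_mod5 al g k_mod6 qE.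
Qed.
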